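(* Fix a Markov policy $\pi$, action thresholds $\{C^{\mathbf a}_h\}$ (hence a fixed pseudo-policy $\bar\pi$), and two sets of state thresholds $\{C^{\mathbf x}_h\}$, $\{(C^{\mathbf x}_h)'\}$. Let $\bar d^\pi_0=(\bar d^\pi_0)'=d_0$ and for $h\ge1$, $\bar d^\pi_h=\mathbf P^{\bar\pi}_{h-1}(\bar d^\pi_{h-1}\wedge C^{\mathbf x}_{h-1}d^D_{h-1})$, $(\bar d^\pi_h)'=\mathbf P^{\bar\pi}_{h-1}((\bar d^\pi_{h-1})'\wedge(C^{\mathbf x}_{h-1})'d^D_{h-1})$. Then for each $h\in[H]$: (1) (Monotonicity) if $C^{\mathbf x}_{h'}\le(C^{\mathbf x}_{h'})'$ for all $h'<h$ then $\bar d^\pi_h\le(\bar d^\pi_h)'$; and if $C^{\mathbf x}_{h'}\ge(C^{\mathbf x}_{h'})'$ for all $h'<h$ then $\bar d^\pi_h\ge(\bar d^\pi_h)'$. (2) $\|(\bar d^\pi_h)'-\bar d^\pi_h\|_1\le\sum_{h'<h}|(C^{\mathbf x}_{h'})'-C^{\mathbf x}_{h'}|$. (3) $\big|\|d^\pi_h-(\bar d^\pi_h)'\|_1-\|d^\pi_h-\bar d^\pi_h\|_1\big|\le\sum_{h'<h}|(C^{\mathbf x}_{h'})'-C^{\mathbf x}_{h'}|$.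
   Context: Setting: finite-horizon episodic MDP, measurable state space $\mathcal X$, finite action space $\mathcal A$, $[H]=\{0,\dots,H-1\}$, transitions $P_h$, initial distribution $d_0$; $d^\pi_h$ is the density of $x_h$ under $\pi$. Offline data: $\mathcal D_h$ consists of tuples $(x_h,a_h,x_{h+1})$ generated by an arbitrary roll-in to $x_h$, then $a_h\sim\pi^D_h(\cdot\mid x_h)$ for a Markov single-step policy $\pi^D_h$, then $x_{h+1}\sim P_h$; $d^D_h\in\Delta(\mathcal X)$ is the marginal density of $x_h$ in $\mathcal D_h$. Notation: $a\wedge b=\min(a,b)$ pointwise; $(\mathbf P^{\bar\pi}_hd)(x'):=\iint P_h(x'\mid x,a)\bar\pi_h(a\mid x)d(x)\mathrm dx\,\mathrm da$; the pseudo-policy is $\bar\pi_h:=\pi_h\wedge C^{\mathbf a}_h\pi^D_h$. *)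

From mathcomp Require Import all_boot all_order all_algebra.
From mathcomp Require Import all_classical all_reals all_analysis.
Set Implicit Arguments. Unset Strict Implicit. Unset Printing Implicit Defensive.
Import Order.TTheory GRing.Theory Num.Theory.
Local Open Scope classical_set_scope.
Local Open Scope ring_scope.
Local Open Scope ereal_scope.

(* Transition operator  (P^{pol} f)(x') = \int_x \sum_a P(x'|x,a) pol(a|x) f(x) mu(dx).
   Pk x a x' is the density (w.r.t. the reference measure mu) of P_h(x'|x,a). *)
Definition Pop {dX} {X : measurableType dX} {R : realType} {A : finType}
  (mu : {measure set X -> \bar R}) (Pk : X -> A -> X -> R) (pol : A -> X -> R)
  (f : X -> \bar R) : X -> \bar R :=
  fun x' => \int[mu]_x (\sum_(a : A) ((Pk x a x' * pol a x)%:E * f x)).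

Definition pibar {R : realType} {A : finType} {X : Type}
  (pi piD : nat -> A -> X -> R) (Ca : nat -> R) (h : nat) : A -> X -> R :=
  fun a x => Order.min (pi h a x) (Ca h * piD h a x)%R.

Fixpoint dbar {dX} {X : measurableType dX} {R : realType} {A : finType}
  (mu : {measure set X -> \bar R}) (P : nat -> X -> A -> X -> R)
  (pib : nat -> A -> X -> R) (d0 : X -> R) (dD : nat -> X -> R)
  (Cx : nat -> R) (h : nat) : X -> \bar R :=
  match h with
  | 0%N => fun x => (d0 x)%:E
  | h'.+1 => Pop mu (P h') (pib h')
      (fun x => Order.min (dbar mu P pib d0 dD Cx h' x) ((Cx h' * dD h' x)%R)%:E)
  end.

Fixpoint dpi {dX} {X : measurableType dX} {R : realType} {A : finType}
  (mu : {measure set X -> \bar R}) (P : nat -> X -> A -> X -> R)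
  (pi : nat -> A -> X -> R) (d0 : X -> R) (h : nat) : X -> \bar R :=
  match h with
  | 0%N => fun x => (d0 x)%:E
  | h'.+1 => Pop mu (P h') (pi h') (dpi mu P pi d0 h')
  end.

Definition L1dist {dX} {X : measurableType dX} {R : realType}
  (mu : {measure set X -> \bar R}) (f g : X -> \bar R) : \bar R :=
  \int[mu]_x `|f x - g x|.

From HB Require Import structures.
From mathcomp Require Import all_boot all_order all_algebra.
From mathcomp Require Import all_classical all_reals all_analysis.
From mathcomp Require Import measurable_realfun lra.
Import Order.TTheory GRing.Theory Num.Theory.
Local Open Scope classical_set_scope.
Local Open Scope ring_scope.
Local Open Scope ereal_scope.

(* The one-step operator P^pol is positive, additive and, when the weights
   pol(.|x) sum to at most 1 (true for the pseudo-policy, as pibar <= pi),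
   mass-nonincreasing by Tonelli; so it is monotone and, through
   |Pf - Pg| <= P|f - g|, a contraction for the L1 distance. Truncating at
   C d^D is monotone in C, and |a /\ C d^D - b /\ C' d^D| <= |a - b| + |C - C'| d^D
   pointwise, so since d^D_h has mass 1 each step adds at most |C'_h - C_h| to
   the L1 distance. The last claim is the reverse triangle inequality. *)

Section extended_real_distance.
Context {R : realType}.
Implicit Types x y z : \bar R.

Lemma abse_subC x y : `|x - y| = `|y - x|.
Proof. by case: x y => [x| |] [y| |] //=; rewrite -?EFinB distrC. Qed.

Lemma lee_distD x y z : `|x - z| <= `|x - y| + `|y - z|.
Proof.
case: x y z => [x| |] [y| |] [z| |] //=; rewrite ?leey //.
by rewrite -EFinD lee_fin ler_distD.
Qed.

Lemma lee_add_dist x y : 0 <= y -> x <= y + `|x - y|.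
Proof.
case: x y => [x| |] [y| |] //= y0; rewrite ?leey ?leNye //.
by rewrite -EFinD lee_fin; have := ler_norm (x - y); lra.
Qed.

Lemma fin_lee_distl x y z : x \is a fin_num -> y \is a fin_num ->
  x <= y + z -> y <= x + z -> `|x - y| <= z.
Proof.
case: x y z => [x| |] [y| |] [z| |] //= _ _; rewrite ?leey //.
by rewrite -!EFinD !lee_fin ler_norml => ? ?; apply/andP; split; lra.
Qed.

Lemma lee_dist_min x y (u v : R) :
  `|Order.min x u%:E - Order.min y v%:E| <= `|x - y| + `|u - v|%:E.
Proof.
case: x y => [x| |] [y| |] //=; rewrite ?leey //.
rewrite -!EFin_min -EFinB -EFinD lee_fin !minEle.
have := ler_norm (x - y); have := ler_norm (y - x).
have := ler_norm (u - v); have := ler_norm (v - u).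
rewrite (distrC y x) (distrC v u) ler_norml.
by case: ifP => ?; case: ifP => ? *; apply/andP; split; lra.
Qed.

End extended_real_distance.

Section L1_distance.
Context d (T : measurableType d) (R : realType) (mu : {measure set T -> \bar R}).
Implicit Types f g k : T -> \bar R.

Lemma measurable_dist f g : measurable_fun setT f -> measurable_fun setT g ->
  measurable_fun setT (fun x => `|f x - g x|).
Proof. by move=> mf mg; apply: measurableT_comp => //; exact: emeasurable_funB. Qed.

Lemma ge0_integrableP f : (forall x, 0 <= f x) ->
  mu.-integrable setT f <-> measurable_fun setT f /\ \int[mu]_x f x < +oo.
Proof.
move=> f0; have -> : \int[mu]_x f x = \int[mu]_x `|f x|.
  by apply: eq_integral => x _; rewrite gee0_abs.
by split=> /integrableP.
Qed.

Lemma L1distC f g : L1dist mu f g = L1dist mu g f.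
Proof. by apply: eq_integral => x _; rewrite abse_subC. Qed.

Lemma L1dist_triangle f g k : measurable_fun setT f -> measurable_fun setT g ->
  measurable_fun setT k -> L1dist mu f g <= L1dist mu f k + L1dist mu k g.
Proof.
move=> mf mg mk; rewrite /L1dist -ge0_integralD //; do ?exact: measurable_dist.
apply: ge0_le_integral => //; first exact: measurable_dist.
  by apply: emeasurable_funD; exact: measurable_dist.
by move=> x _; exact: lee_distD.
Qed.

Lemma L1dist_fin_num f g : mu.-integrable setT f -> mu.-integrable setT g ->
  L1dist mu f g \is a fin_num.
Proof.
move=> fi gi; have /integrableP[_] := integrableB measurableT fi gi.
by rewrite ge0_fin_numE //; apply: integral_ge0 => x _.
Qed.

Lemma L1dist_reverse_triangle k f g : mu.-integrable setT k ->
  mu.-integrable setT f -> mu.-integrable setT g ->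
  `|L1dist mu k f - L1dist mu k g| <= L1dist mu f g.
Proof.
move=> ki fi gi; have mk := measurable_int _ ki.
have [mf mg] := conj (measurable_int _ fi) (measurable_int _ gi).
apply: fin_lee_distl; do ?exact: L1dist_fin_num.
  by rewrite (L1distC f); exact: L1dist_triangle.
exact: L1dist_triangle.
Qed.

End L1_distance.

Section substochastic_operator.
Context {d} {X : measurableType d} {R : realType} {A : finType}.
Variables (mu : {measure set X -> \bar R}) (mu_sf : sigma_finite setT mu).
Variables (Pk : X -> A -> X -> R) (pol : A -> X -> R).
Hypothesis mPk : forall a, measurable_fun setT (fun xy : X * X => Pk xy.1 a xy.2).
Hypothesis Pk_ge0 : forall x a y, (0 <= Pk x a y)%R.
Hypothesis Pk1 : forall x a, \int[mu]_y (Pk x a y)%:E = 1.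
Hypothesis mpol : forall a, measurable_fun setT (pol a).
Hypothesis pol_ge0 : forall a x, (0 <= pol a x)%R.
Hypothesis pol_le1 : forall x, (\sum_(a : A) pol a x <= 1)%R.
Implicit Types f g : X -> \bar R.

(* Tonelli needs [mu] as a [{sigma_finite_measure}]; this is [mu] itself, so
   integrals against the two are convertible. *)
Let mu_sigma_finite : {sigma_finite_measure set X -> \bar R} :=
  HB.pack_for (sigma_finite_measure X R) (Measure.sort mu)
    (isSFinite.Build _ _ _ mu (sfinite_measure_sigma_finite mu_sf))
    (isSigmaFinite.Build _ _ _ mu mu_sf).

Let Pop_integrand f (xy : X * X) : \bar R :=
  \sum_(a : A) ((Pk xy.1 a xy.2 * pol a xy.1)%:E * f xy.1).

Let Pop_integrand_ge0 {f} : (forall x, 0 <= f x) ->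
  forall xy, 0 <= Pop_integrand f xy.
Proof.
move=> f0 xy; apply: sume_ge0 => a _.
by apply: mule_ge0 => //; rewrite lee_fin mulr_ge0.
Qed.

Let measurable_Pop_integrand {f} : measurable_fun setT f ->
  measurable_fun setT (Pop_integrand f).
Proof.
move=> mf; apply: emeasurable_sum => a; apply: emeasurable_funM.
  apply/measurable_EFinP; apply: measurable_funM; first exact: mPk.
  exact: measurableT_comp (mpol a) measurable_fst.
exact: measurableT_comp mf measurable_fst.
Qed.

Let measurable_Pop_integrand_y {f} y : measurable_fun setT f ->
  measurable_fun setT (fun x => Pop_integrand f (x, y)).
Proof.
move=> mf; apply: measurableT_comp (measurable_Pop_integrand mf) _.
exact: pair2_measurable.
Qed.

Let integral_Pop_integrand f x : 0 <= f x ->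
  \int[mu]_y Pop_integrand f (x, y) = (\sum_(a : A) pol a x)%:E * f x.
Proof.
move=> fx0; have mPkx a : measurable_fun setT (fun y => Pk x a y).
  exact: measurableT_comp (mPk a) (pair1_measurable x).
rewrite ge0_integral_sum //=; first last.
- by move=> a y _; apply: mule_ge0 => //; rewrite lee_fin mulr_ge0.
- move=> a; apply: emeasurable_funM => //.
  by apply/measurable_EFinP; exact: measurable_funM.
rewrite -sumEFin ge0_sume_distrl; last by move=> a _; rewrite lee_fin.
apply: eq_bigr => a _; rewrite ge0_integralZr //; first last.
- by move=> y _; rewrite lee_fin mulr_ge0.
- by apply/measurable_EFinP; exact: measurable_funM.
under eq_integral do rewrite EFinM.
rewrite ge0_integralZr ?Pk1 ?mul1e ?lee_fin //; last by move=> y _; rewrite lee_fin.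
by apply/measurable_EFinP; exact: mPkx.
Qed.

Lemma Pop_ge0 f : (forall x, 0 <= f x) -> forall y, 0 <= Pop mu Pk pol f y.
Proof.
by move=> f0 y; apply: integral_ge0 => x _; exact: (Pop_integrand_ge0 f0 (x, y)).
Qed.

Lemma measurable_Pop f : measurable_fun setT f -> (forall x, 0 <= f x) ->
  measurable_fun setT (Pop mu Pk pol f).
Proof.
move=> mf f0.
exact: (measurable_fun_fubini_tonelli_G (m1 := mu_sigma_finite) _
  (measurable_Pop_integrand mf) (Pop_integrand_ge0 f0)).
Qed.

Lemma le_Pop f g : measurable_fun setT f -> measurable_fun setT g ->
  (forall x, 0 <= f x) -> (forall x, f x <= g x) ->
  forall y, Pop mu Pk pol f y <= Pop mu Pk pol g y.
Proof.
move=> mf mg f0 fg y; apply: ge0_le_integral => //.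
- by move=> x _; exact: (Pop_integrand_ge0 f0 (x, y)).
- exact: measurable_Pop_integrand_y.
- exact: measurable_Pop_integrand_y.
move=> x _; apply: lee_sum => a _; apply: lee_wpmul2l => //.
by rewrite lee_fin mulr_ge0.
Qed.

Lemma PopD f g : measurable_fun setT f -> measurable_fun setT g ->
  (forall x, 0 <= f x) -> (forall x, 0 <= g x) ->
  forall y, Pop mu Pk pol (f \+ g) y = Pop mu Pk pol f y + Pop mu Pk pol g y.
Proof.
move=> mf mg f0 g0 y; rewrite /Pop -ge0_integralD //.
- apply: eq_integral => x _; rewrite -big_split /=; apply: eq_bigr => a _.
  by rewrite ge0_muleDr.
- by move=> x _; exact: (Pop_integrand_ge0 f0 (x, y)).
- exact: measurable_Pop_integrand_y.
- by move=> x _; exact: (Pop_integrand_ge0 g0 (x, y)).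
- exact: measurable_Pop_integrand_y.
Qed.

Lemma integral_Pop_le f : measurable_fun setT f -> (forall x, 0 <= f x) ->
  \int[mu]_y Pop mu Pk pol f y <= \int[mu]_x f x.
Proof.
move=> mf f0.
rewrite /Pop -(fubini_tonelli (m1 := mu_sigma_finite) (m2 := mu_sigma_finite) _
  (measurable_Pop_integrand mf) (Pop_integrand_ge0 f0)) /=.
apply: ge0_le_integral => //.
- by move=> x _; apply: integral_ge0 => y _; exact: (Pop_integrand_ge0 f0 (x, y)).
- exact: (measurable_fun_fubini_tonelli_F (m2 := mu_sigma_finite) _
    (measurable_Pop_integrand mf) (Pop_integrand_ge0 f0)).
move=> x _; rewrite /fubini_F integral_Pop_integrand // -[leRHS]mul1e.
by apply: lee_wpmul2r => //; rewrite lee_fin.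
Qed.

Lemma integrable_Pop f : (forall x, 0 <= f x) -> mu.-integrable setT f ->
  mu.-integrable setT (Pop mu Pk pol f).
Proof.
move=> f0 /integrableP[mf fi]; apply/integrableP; split; first exact: measurable_Pop.
under eq_integral do rewrite gee0_abs ?Pop_ge0 //.
apply: le_lt_trans (integral_Pop_le _ mf f0) _.
by under eq_integral do rewrite -[f _]gee0_abs //.
Qed.

Lemma L1dist_Pop_le f g : (forall x, 0 <= f x) -> (forall x, 0 <= g x) ->
  mu.-integrable setT f -> mu.-integrable setT g ->
  L1dist mu (Pop mu Pk pol f) (Pop mu Pk pol g) <= L1dist mu f g.
Proof.
move=> f0 g0 fi gi.
have [mf mg] := conj (measurable_int _ fi) (measurable_int _ gi).
pose dfg x := `|f x - g x|.
have mdfg : measurable_fun setT dfg by exact: measurable_dist.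
have dfg0 x : 0 <= dfg x by exact: abse_ge0.
apply: le_trans (integral_Pop_le _ mdfg dfg0).
(* [|Pf - Pg| <= P|f - g|] holds wherever [Pf] and [Pg] are finite, i.e. a.e. *)
apply: ae_ge0_le_integral => //.
- by apply: measurable_dist; exact: measurable_Pop.
- by move=> y _; exact: Pop_ge0.
- exact: measurable_Pop.
have /integrable_ae Pf_fin := integrable_Pop _ f0 fi.
have /integrable_ae Pg_fin := integrable_Pop _ g0 gi.
apply: filterS2 (Pf_fin measurableT) (Pg_fin measurableT) => y Pfy Pgy _.
apply: fin_lee_distl; [exact: Pfy I|exact: Pgy I| |].
- rewrite -PopD //; apply: le_Pop => //; first exact: emeasurable_funD.
  by move=> x; exact: lee_add_dist.
- rewrite -PopD //; apply: le_Pop => //; first exact: emeasurable_funD.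
  by move=> x; rewrite /dfg abse_subC; exact: lee_add_dist.
Qed.

End substochastic_operator.

Section truncated_marginals.
Context {d} {X : measurableType d} {R : realType} {A : finType}.
Variables (mu : {measure set X -> \bar R}) (mu_sf : sigma_finite setT mu).
Variables (d0 : X -> R) (P : nat -> X -> A -> X -> R).
Variables (pi piD : nat -> A -> X -> R) (dD : nat -> X -> R) (Ca : nat -> R).
Hypothesis md0 : measurable_fun setT d0.
Hypothesis d0_ge0 : forall x, (0 <= d0 x)%R.
Hypothesis d0_int1 : \int[mu]_x (d0 x)%:E = 1.
Hypothesis mP : forall h a, measurable_fun setT (fun xy : X * X => P h xy.1 a xy.2).
Hypothesis P_ge0 : forall h x a y, (0 <= P h x a y)%R.
Hypothesis P_int1 : forall h x a, \int[mu]_y (P h x a y)%:E = 1.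
Hypothesis mpi : forall h a, measurable_fun setT (pi h a).
Hypothesis pi_ge0 : forall h a x, (0 <= pi h a x)%R.
Hypothesis pi_sum1 : forall h x, (\sum_(a : A) pi h a x)%R = 1%R.
Hypothesis mpiD : forall h a, measurable_fun setT (piD h a).
Hypothesis piD_ge0 : forall h a x, (0 <= piD h a x)%R.
Hypothesis mdD : forall h, measurable_fun setT (dD h).
Hypothesis dD_ge0 : forall h x, (0 <= dD h x)%R.
Hypothesis dD_int1 : forall h, \int[mu]_x (dD h x)%:E = 1.
Hypothesis Ca_ge0 : forall h, (0 <= Ca h)%R.

Local Notation pib := (pibar pi piD Ca).
Local Notation db := (dbar mu P pib d0 dD).

Lemma measurable_pibar h a : measurable_fun setT (pib h a).
Proof. by apply: measurable_minr => //; exact: measurable_funM. Qed.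

Lemma pibar_ge0 h a x : (0 <= pib h a x)%R.
Proof. by rewrite /pibar le_min pi_ge0 mulr_ge0. Qed.

Lemma sum_pibar_le1 h x : (\sum_(a : A) pib h a x <= 1)%R.
Proof. by rewrite -(pi_sum1 h x); apply: ler_sum => a _; rewrite ge_min lexx. Qed.

Let sum_pi_le1 h x : (\sum_(a : A) pi h a x <= 1)%R.
Proof. by rewrite pi_sum1. Qed.

Local Hint Resolve mu_sf mP P_ge0 P_int1 mpi pi_ge0 sum_pi_le1 : core.
Local Hint Resolve measurable_pibar pibar_ge0 sum_pibar_le1 : core.

Lemma measurable_scaled_dD (c : R) h :
  measurable_fun setT (fun x => ((c * dD h x)%R)%:E).
Proof. by apply/measurable_EFinP; exact: measurable_funM. Qed.

Lemma integral_scaled_dD (c : R) h : (0 <= c)%R ->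
  \int[mu]_x ((c * dD h x)%R)%:E = c%:E.
Proof.
move=> c0; under eq_integral do rewrite EFinM.
rewrite ge0_integralZl_EFin ?dD_int1 ?mule1 //; last exact/measurable_EFinP.
by move=> x _; rewrite lee_fin.
Qed.

Lemma integrable_scaled_dD (c : R) h : (0 <= c)%R ->
  mu.-integrable setT (fun x => ((c * dD h x)%R)%:E).
Proof.
move=> c0; apply/ge0_integrableP => [x|]; first by rewrite lee_fin mulr_ge0.
by rewrite integral_scaled_dD // ltry; split => //; exact: measurable_scaled_dD.
Qed.

Definition trunc_dbar (Cx : nat -> R) h x :=
  Order.min (db Cx h x) ((Cx h * dD h x)%R)%:E.

Lemma dbarS Cx h : db Cx h.+1 = Pop mu (P h) (pib h) (trunc_dbar Cx h).
Proof. by []. Qed.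

Section threshold.
Variable Cx : nat -> R.
Hypothesis Cx_ge0 : forall h, (0 <= Cx h)%R.

Lemma dbar_ge0 h x : 0 <= db Cx h x.
Proof.
elim: h x => [|h IH] x; first by rewrite lee_fin.
by apply: Pop_ge0 => // y; rewrite le_min IH lee_fin mulr_ge0.
Qed.

Lemma trunc_dbar_ge0 h x : 0 <= trunc_dbar Cx h x.
Proof. by rewrite le_min dbar_ge0 lee_fin mulr_ge0. Qed.

Lemma measurable_dbar h : measurable_fun setT (db Cx h).
Proof.
elim: h => [|h IH]; first exact/measurable_EFinP.
rewrite dbarS; apply: measurable_Pop => //; last exact: trunc_dbar_ge0.
exact: measurable_mine IH (measurable_scaled_dD (Cx h) h).
Qed.

Lemma measurable_trunc_dbar h : measurable_fun setT (trunc_dbar Cx h).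
Proof.
exact: measurable_mine (measurable_dbar h) (measurable_scaled_dD (Cx h) h).
Qed.

Lemma integrable_trunc_dbar h : mu.-integrable setT (trunc_dbar Cx h).
Proof.
apply: (le_integrable measurableT (measurable_trunc_dbar h) _
  (integrable_scaled_dD _ h (Cx_ge0 h))).
move=> x _; rewrite !gee0_abs ?trunc_dbar_ge0 ?lee_fin ?mulr_ge0 //.
by rewrite ge_min lexx orbT.
Qed.

Lemma integrable_dbar h : mu.-integrable setT (db Cx h).
Proof.
case: h => [|h]; last by rewrite dbarS; apply: integrable_Pop => //;
  [exact: trunc_dbar_ge0|exact: integrable_trunc_dbar].
apply/ge0_integrableP => [x|]; first by rewrite lee_fin.
by split; [exact/measurable_EFinP|rewrite /= d0_int1 ltry].
Qed.

End threshold.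

Lemma le_dbar Cx Cx' : (forall h, (0 <= Cx h)%R) -> (forall h, (0 <= Cx' h)%R) ->
  forall h, (forall h', (h' < h)%N -> (Cx h' <= Cx' h')%R) ->
  forall x, db Cx h x <= db Cx' h x.
Proof.
move=> Cx_ge0 Cx'_ge0; elim=> [//|h IH] Cx_le x.
rewrite !dbarS; apply: le_Pop => //; last first.
- move=> y; apply: le_min2; first by apply: IH => h' /ltnW; exact: Cx_le.
  by rewrite lee_fin ler_wpM2r // Cx_le.
- exact: trunc_dbar_ge0.
- exact: measurable_trunc_dbar.
- exact: measurable_trunc_dbar.
Qed.

Lemma L1dist_trunc_dbar_le Cx Cx' h :
  (forall h, (0 <= Cx h)%R) -> (forall h, (0 <= Cx' h)%R) ->
  L1dist mu (trunc_dbar Cx' h) (trunc_dbar Cx h) <=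
  L1dist mu (db Cx' h) (db Cx h) + `|Cx' h - Cx h|%:E.
Proof.
move=> Cx_ge0 Cx'_ge0.
have [mdb mdb'] := conj (measurable_dbar _ Cx_ge0 h) (measurable_dbar _ Cx'_ge0 h).
rewrite -[X in _ + X](integral_scaled_dD _ h (normr_ge0 (Cx' h - Cx h)%R)).
rewrite /L1dist -ge0_integralD //; first last.
- exact: measurable_scaled_dD.
- by move=> x _; rewrite lee_fin mulr_ge0.
- exact: measurable_dist.
apply: ge0_le_integral => //.
- by apply: measurable_dist; exact: measurable_trunc_dbar.
- by apply: emeasurable_funD; [exact: measurable_dist|exact: measurable_scaled_dD].
move=> x _; rewrite -(ger0_norm (dD_ge0 h x)) -normrM mulrBl.
exact: lee_dist_min.
Qed.

Lemma L1dist_dbar_le Cx Cx' h :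
  (forall h, (0 <= Cx h)%R) -> (forall h, (0 <= Cx' h)%R) ->
  L1dist mu (db Cx' h) (db Cx h) <= (\sum_(h' < h) `|Cx' h' - Cx h'|)%R%:E.
Proof.
move=> Cx_ge0 Cx'_ge0; elim: h => [|h IH].
  rewrite big_ord0 /L1dist (eq_integral (fun=> 0)) ?integral0 // => x _.
  by rewrite /= subrr normr0.
rewrite !dbarS big_ord_recr /= EFinD.
apply: (@le_trans _ _ (L1dist mu (trunc_dbar Cx' h) (trunc_dbar Cx h))).
  apply: L1dist_Pop_le => //; do ?exact: trunc_dbar_ge0.
  - exact: integrable_trunc_dbar.
  - exact: integrable_trunc_dbar.
apply: le_trans (L1dist_trunc_dbar_le _ _ _ Cx_ge0 Cx'_ge0) _.
exact: leeD IH (lexx _).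
Qed.

Lemma dpi_ge0 h x : 0 <= dpi mu P pi d0 h x.
Proof.
elim: h x => [|h IH] x; first by rewrite lee_fin.
exact: Pop_ge0.
Qed.

Lemma integrable_dpi h : mu.-integrable setT (dpi mu P pi d0 h).
Proof.
elim: h => [|h IH].
  apply/ge0_integrableP => [x|]; first by rewrite lee_fin.
  by split; [exact/measurable_EFinP|rewrite /= d0_int1 ltry].
by apply: integrable_Pop => //; exact: dpi_ge0.
Qed.

End truncated_marginals.

Theorem proposition5 (dX : measure_display) (X : measurableType dX)
  (R : realType) (A : finType) (H : nat)
  (mu : {measure set X -> \bar R}) (mu_sf : sigma_finite setT mu)
  (d0 : X -> R) (P : nat -> X -> A -> X -> R)
  (pi piD : nat -> A -> X -> R) (dD : nat -> X -> R)
  (Ca Cx Cx' : nat -> R) :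
  (* initial distribution is a density *)
  measurable_fun setT d0 -> (forall x, (0 <= d0 x)%R) ->
  \int[mu]_x (d0 x)%:E = 1 ->
  (* transition densities *)
  (forall h a, measurable_fun setT (fun xy : X * X => P h xy.1 a xy.2)) ->
  (forall h x a y, (0 <= P h x a y)%R) ->
  (forall h x a, \int[mu]_y (P h x a y)%:E = 1) ->
  (* Markov policy pi and data policy piD *)
  (forall h a, measurable_fun setT (pi h a)) ->
  (forall h a x, (0 <= pi h a x)%R) ->
  (forall h x, (\sum_(a : A) pi h a x)%R = 1%R) ->
  (forall h a, measurable_fun setT (piD h a)) ->
  (forall h a x, (0 <= piD h a x)%R) ->
  (forall h x, (\sum_(a : A) piD h a x)%R = 1%R) ->
  (* data state marginals d^D_h are densities *)
  (forall h, measurable_fun setT (dD h)) ->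
  (forall h x, (0 <= dD h x)%R) ->
  (forall h, \int[mu]_x (dD h x)%:E = 1) ->
  (* nonnegative thresholds *)
  (forall h, (0 <= Ca h)%R) -> (forall h, (0 <= Cx h)%R) -> (forall h, (0 <= Cx' h)%R) ->
  forall h : nat, (h < H)%N ->
  let db := dbar mu P (pibar pi piD Ca) d0 dD Cx h in
  let db' := dbar mu P (pibar pi piD Ca) d0 dD Cx' h in
  let S := (\sum_(h' < h) `|Cx' h' - Cx h'|)%R in
  ((forall h', (h' < h)%N -> (Cx h' <= Cx' h')%R) -> forall x, db x <= db' x) /\
  ((forall h', (h' < h)%N -> (Cx' h' <= Cx h')%R) -> forall x, db' x <= db x) /\
  L1dist mu db' db <= S%:E /\
  `| L1dist mu (dpi mu P pi d0 h) db' - L1dist mu (dpi mu P pi d0 h) db | <= S%:E.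
Proof.
move=> md0 d0_ge0 d0_int1 mP P_ge0 P_int1 mpi pi_ge0 pi_sum1 mpiD piD_ge0 _.
move=> mdD dD_ge0 dD_int1 Ca_ge0 Cx_ge0 Cx'_ge0 h _ db db' S.
have L1_le : L1dist mu db' db <= S%:E by exact: L1dist_dbar_le.
split; first exact: le_dbar.
split; first exact: le_dbar.
split=> //; apply: le_trans L1_le.
by apply: L1dist_reverse_triangle;
  [exact: integrable_dpi|exact: integrable_dbar|exact: integrable_dbar].
Qed.
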